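(* Let $(G_0,\mathfrak g)$ be a super Poincaré group. Then $\Gamma=\{p\mid\Phi_p\ge0\}$, i.e. for any $p\in\mathbb R^{1,D-1}$, $\Phi_p\ge0$ if and only if $p_0\ge0$ and $\langle p,p\rangle\ge0$. Moreover, if $p_0>0$ and $\langle p,p\rangle>0$, then $\Phi_p>0$ (positive definite).
   Context: A super Poincaré group is a super Lie group $(G_0,\mathfrak g)$ (a real Lie group $G_0$ and finite-dimensional real super Lie algebra $\mathfrak g=\mathfrak g_0\oplus\mathfrak g_1$, $\mathfrak g_0=\mathrm{Lie}(G_0)$, $G_0$ acting on $\mathfrak g$ by even automorphisms extending Ad with differential ad) with $G_0=T_0\rtimes L_0$, $T_0=\mathbb R^{1,D-1}$, $D\ge4$, $\langle x,x'\rangle=x_0x'_0-\sum_{j\ge1}x_jx'_j$, $L_0=\mathrm{Spin}(1,D-1)$ acting on $T_0$ via its covering of $\mathrm{SO}_0(1,D-1)$, $\mathfrak g_1$ a real spinorial $L_0$-module (its complexification a direct sum of complex spin representations), $T_0$ acting trivially on $\mathfrak g_1$, $[\mathfrak g_1,\mathfrak g_1]\subset\mathfrak t_0$, and $\langle[X,X],x\rangle>0$ for all $0\neq X\in\mathfrak g_1$, $x\in\Gamma^+=\{x:\langle x,x\rangle>0,x_0>0\}$. $\Gamma=\{p:\langle p,p\rangle\ge0,p_0\ge0\}$. For $p\in\mathbb R^{1,D-1}$ (identified with $T_0^\ast$ via $\langle\cdot,\cdot\rangle$), $\Phi_p(X,Y)=\frac12\langle[X,Y],p\rangle$ on $\mathfrak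 g_1$, and $\Phi_p\ge0$ means $\Phi_p(X,X)\ge0$ for all $X$. *)

From HB Require Import structures.
From mathcomp Require Import all_boot all_order all_algebra.
From mathcomp Require Import reals.
Set Implicit Arguments.
Unset Strict Implicit.
Unset Printing Implicit Defensive.
Import Order.TTheory GRing.Theory Num.Theory.
Local Open Scope ring_scope.

Section Minkowski.
Variables (R : realType) (D : nat).

(* Minkowski space R^{1,D-1} as row vectors 'rV[R]_D; coordinate 0 is time. *)
Definition tcomp (x : 'rV[R]_D) : R := \sum_(j < D | val j == 0%N) x 0 j.

Definition mink (x y : 'rV[R]_D) : R :=
  \sum_(j < D) (if val j == 0%N then 1 else -1) * (x 0 j * y 0 j).

Definition in_Gamma (p : 'rV[R]_D) : Prop := 0 <= mink p p /\ 0 <= tcomp p.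
Definition in_Gamma_plus (x : 'rV[R]_D) : Prop := 0 < mink x x /\ 0 < tcomp x.

Definition lorentz0 (L : 'M[R]_D) : Prop :=
  (forall x y : 'rV[R]_D, mink (x *m L) (y *m L) = mink x y) /\
  \det L = 1 /\
  (forall x, in_Gamma_plus x -> in_Gamma_plus (x *m L)).

End Minkowski.

(* A super Poincare group (G_0, g) with G_0 = T_0 x| L_0, g_1 = R^N.
   Actions are left actions written on row vectors, so the matrix of a product
   is the reversed product of matrices. *)
Record super_poincare (R : realType) (D N : nat) := SuperPoincare {
  spL : Type;
  spmul : spL -> spL -> spL;
  spone : spL;
  spinv : spL -> spL;
  spmulA : forall a b c, spmul a (spmul b c) = spmul (spmul a b) c;
  spmul1g : forall a, spmul spone a = a;
  spmulVg : forall a, spmul (spinv a) a = spone;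
  cover : spL -> 'M[R]_D;
  cover_mul : forall a b, cover (spmul a b) = cover b *m cover a;
  cover_lorentz : forall a, lorentz0 (cover a);
  cover_onto : forall L : 'M[R]_D, lorentz0 L -> exists a, cover a = L;
  rho : spL -> 'M[R]_N;
  rho_mul : forall a b, rho (spmul a b) = rho b *m rho a;
  rho_one : rho spone = 1%:M;
  br : 'rV[R]_N -> 'rV[R]_N -> 'rV[R]_D;
  br_sym : forall X Y, br X Y = br Y X;
  br_linear : forall (c : R) X Y Z, br (c *: X + Y) Z = c *: br X Z + br Y Z;
  br_equiv : forall a X Y, br (X *m rho a) (Y *m rho a) = br X Y *m cover a;
  br_pos : forall X x, X != 0 -> in_Gamma_plus x -> 0 < mink (br X X) x
}.

Definition Phi (R : realType) (D N : nat) (G : super_poincare R D N)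
  (p : 'rV[R]_D) (X Y : 'rV[R]_N) : R := 2^-1 * mink (br G X Y) p.

Definition Phi_nonneg (R : realType) (D N : nat) (G : super_poincare R D N)
  (p : 'rV[R]_D) : Prop := forall X, 0 <= Phi G p X X.

Definition Phi_posdef (R : realType) (D N : nat) (G : super_poincare R D N)
  (p : 'rV[R]_D) : Prop := forall X, X != 0 -> 0 < Phi G p X X.

From HB Require Import structures.
From mathcomp Require Import all_boot all_order all_algebra.
From mathcomp Require Import reals.
From mathcomp Require Import ring lra.
Set Implicit Arguments.
Unset Strict Implicit.
Unset Printing Implicit Defensive.

Import Order.TTheory GRing.Theory Num.Theory.
Local Open Scope ring_scope.

(* The vectors [X,X] with X <> 0 pair positively with the open cone Gamma^+,
   hence nonnegatively with its closure Gamma: this gives Phi_p >= 0 on Gamma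
   and Phi_p > 0 on Gamma^+.  Conversely, the set of all [X,X] is invariant
   under SO_0(1,D-1), since L_0 covers it and the bracket is equivariant.
   Write p = p_0 e_0 + mu n with n a unit spatial vector and mu >= 0; p lies in
   Gamma iff mu <= p_0.  If mu > p_0, a boost along a spatial direction m
   orthogonal to n makes the lightlike coordinate <w, e_0 - n> of
   w = [X_0,X_0] positive, and a large boost along n then stretches this
   coordinate until <w, p> < 0, contradicting Phi_p >= 0. *)

Lemma exists_div_lt_mul (F : realFieldType) (K Q : F) :
  0 < Q -> exists2 t, 0 < t & K / t < Q * t.
Proof.
move=> Q_gt0; pose t := 1 + `|K| / Q.
have t_ge1 : 1 <= t by rewrite lerDl divr_ge0 ?normr_ge0 ?ltW.
have t_gt0 : 0 < t := lt_le_trans ltr01 t_ge1.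
have Qt : Q * t = Q + `|K| by rewrite /t; field; exact: lt0r_neq0.
exists t => //; rewrite ltr_pdivrMr // -mulrA mulrA Qt.
by have := ler_norm K; nra.
Qed.

Section Minkowski.
Variables (R : realType) (d : nat).
Implicit Types (x y p r v w n m : 'rV[R]_d.+1) (A B L : 'M[R]_d.+1).

Definition mink_sign (j : 'I_d.+1) : R := if val j == 0%N then 1 else -1.
Definition mink_mx : 'M[R]_d.+1 := diag_mx (\row_j mink_sign j).
Definition e0 : 'rV[R]_d.+1 := delta_mx 0 ord0.
Definition unit_spatial n := n 0 ord0 = 0 /\ mink n n = -1.

Lemma minkE x y : mink x y = (x *m mink_mx *m y^T) 0 0.
Proof.
rewrite /mink mul_mx_diag !mxE; apply: eq_bigr => j _.
by rewrite !mxE /mink_sign; ring.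
Qed.

Lemma minkC x y : mink x y = mink y x.
Proof. by rewrite /mink; apply: eq_bigr => j _; ring. Qed.

Lemma minkDl x y r : mink (x + y) r = mink x r + mink y r.
Proof. by rewrite /mink -big_split /=; apply: eq_bigr => j _; rewrite !mxE; ring. Qed.

Lemma minkZl k x y : mink (k *: x) y = k * mink x y.
Proof. by rewrite /mink mulr_sumr; apply: eq_bigr => j _; rewrite !mxE; ring. Qed.

Lemma minkNl x y : mink (- x) y = - mink x y.
Proof. by rewrite -scaleN1r minkZl mulN1r. Qed.

Lemma minkDr x y r : mink r (x + y) = mink r x + mink r y.
Proof. by rewrite minkC minkDl !(minkC r). Qed.

Lemma minkZr k x y : mink y (k *: x) = k * mink y x.
Proof. by rewrite minkC minkZl minkC. Qed.

Lemma minkNr x y : mink y (- x) = - mink y x.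
Proof. by rewrite minkC minkNl minkC. Qed.

Definition mink_linE := (minkDl, minkDr, minkZl, minkZr, minkNl, minkNr).

Lemma mink_deltal i y : mink (delta_mx 0 i) y = mink_sign i * y 0 i.
Proof.
rewrite /mink (bigD1 i) //= big1 ?addr0 => [|j /negbTE neq_ji].
  by rewrite mxE !eqxx mul1r.
by rewrite mxE neq_ji andbF mul0r mulr0.
Qed.

Lemma e0_time : e0 0 ord0 = 1.
Proof. by rewrite mxE. Qed.

Lemma mink_e0l y : mink e0 y = y 0 ord0.
Proof. by rewrite mink_deltal /mink_sign mul1r. Qed.

Lemma mink_e0r y : mink y e0 = y 0 ord0.
Proof. by rewrite minkC mink_e0l. Qed.

Lemma tcompE x : tcomp x = x 0 ord0.
Proof. by rewrite /tcomp (big_pred1 ord0). Qed.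

Lemma mink_spatial r : r 0 ord0 = 0 -> mink r r = - \sum_j r 0 j ^+ 2.
Proof.
move=> r0; rewrite /mink -sumrN; apply: eq_bigr => j _.
rewrite /mink_sign; case: eqP => [j0|_]; last by rewrite mulN1r expr2.
have -> : j = ord0 by exact: val_inj.
by rewrite r0 expr0n !mulr0 oppr0.
Qed.

Lemma mink_spatial_le0 r : r 0 ord0 = 0 -> mink r r <= 0.
Proof.
by move/mink_spatial->; rewrite oppr_le0 sumr_ge0 // => j _; rewrite sqr_ge0.
Qed.

Lemma mink_spatial_lt0 r : r 0 ord0 = 0 -> r != 0 -> mink r r < 0.
Proof.
move=> /mink_spatial-> nz_r.
have entry_sqr_ge0 j : true -> 0 <= r 0 j ^+ 2 by rewrite sqr_ge0.
have /existsP [j rj] : [exists j, r 0 j != 0].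
  apply: contraNT nz_r => /existsPn r0; apply/eqP/rowP => j.
  by rewrite mxE; apply/eqP/negPn/r0.
rewrite oppr_lt0 lt_def sumr_ge0 // andbT psumr_neq0 //.
by apply/hasP; exists j; rewrite ?mem_index_enum //= exprn_even_gt0.
Qed.

Lemma isometry_det_sqr L :
  (forall x y, mink (x *m L) (y *m L) = mink x y) -> \det L ^+ 2 = 1.
Proof.
move=> isoL.
have entry (A : 'M[R]_d.+1) i j :
    A i j = ((delta_mx 0 i : 'rV_d.+1) *m A *m (delta_mx 0 j : 'rV_d.+1)^T) 0 0.
  by rewrite -rowE trmx_delta -colE !mxE.
have congL : L *m mink_mx *m L^T = mink_mx.
  apply/matrixP => i j; rewrite [LHS]entry [RHS]entry -minkE -isoL minkE.
  by rewrite trmx_mul !mulmxA.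
have det_mink_mx : \det mink_mx != 0.
  rewrite det_diag; apply/prodf_neq0 => i _; rewrite mxE /mink_sign.
  by case: ifP; rewrite ?oppr_eq0 oner_eq0.
apply: (mulIf det_mink_mx); rewrite mul1r -{2}congL !det_mulmx det_tr.
by rewrite expr2 mulrAC.
Qed.

Lemma lorentz0M A B : lorentz0 A -> lorentz0 B -> lorentz0 (A *m B).
Proof.
move=> [isoA [detA futA]] [isoB [detB futB]]; split; last split.
- by move=> x y; rewrite !mulmxA isoB isoA.
- by rewrite det_mulmx detA detB mulr1.
- by move=> x /futA /futB; rewrite mulmxA.
Qed.

Lemma Gamma_plus_e0 : in_Gamma_plus e0.
Proof. by split; rewrite ?tcompE ?mink_e0l e0_time ltr01. Qed.

Lemma Gamma_plus_shift p eps : in_Gamma p -> 0 < eps -> in_Gamma_plus (p + eps *: e0).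
Proof.
rewrite /in_Gamma /in_Gamma_plus !tcompE => -[pp_ge0 p0_ge0] eps_gt0.
split; last by rewrite -mink_e0r minkDl minkZl !mink_e0r e0_time; lra.
rewrite !mink_linE !mink_e0l !mink_e0r e0_time.
by have := mulr_gt0 eps_gt0 eps_gt0; have := mulr_ge0 (ltW eps_gt0) p0_ge0; nra.
Qed.

Lemma dual_Gamma_plus_Gamma w p :
  (forall x, in_Gamma_plus x -> 0 < mink w x) -> in_Gamma p -> 0 <= mink w p.
Proof.
move=> w_pos Gp; have := w_pos _ Gamma_plus_e0; rewrite mink_e0r => w0_gt0.
apply/ler_addgt0Pl => e e_gt0.
have := w_pos _ (Gamma_plus_shift Gp (divr_gt0 e_gt0 w0_gt0)).
by rewrite minkDr minkZr mink_e0r divfK ?gt_eqF // addrC => /ltW.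
Qed.

Lemma unit_spatialN n : unit_spatial n -> unit_spatial (- n).
Proof. by case=> n0 nn; split; rewrite ?mxE ?n0 ?oppr0 // minkNl minkNr opprK. Qed.

Lemma unit_spatial_delta i : val i != 0%N -> unit_spatial (delta_mx 0 i).
Proof.
move=> i_neq0; split.
  by rewrite mxE (_ : ord0 == i = false) ?andbF //; apply: contraNF i_neq0 => /eqP <-.
by rewrite mink_deltal /mink_sign (negbTE i_neq0) mxE !eqxx mulr1.
Qed.

Lemma unit_spatial_normalize r :
  r 0 ord0 = 0 -> r != 0 -> unit_spatial ((Num.sqrt (- mink r r))^-1 *: r).
Proof.
move=> r0 nz_r; have rr_lt0 := mink_spatial_lt0 r0 nz_r.
split; first by rewrite mxE r0 mulr0.
rewrite minkZl minkZr mulrA -expr2 exprVn sqr_sqrtr ?oppr_ge0 ?ltW //.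
by rewrite invrN mulNr mulVf ?lt_eqF.
Qed.

Lemma Gamma_plus_lightcone n x :
  unit_spatial n -> in_Gamma_plus x -> 0 < mink x (e0 + n).
Proof.
move=> [n0 nn] [xx_gt0]; rewrite tcompE.
set a := x 0 ord0; set f := mink x n => a_gt0.
have : mink (x - a *: e0 + f *: n) (x - a *: e0 + f *: n) <= 0.
  apply: mink_spatial_le0.
  by rewrite -mink_e0r !mink_linE !mink_e0r e0_time n0 -/a; ring.
rewrite !mink_linE !mink_e0l !mink_e0r e0_time n0 nn (minkC n x) -/a -/f.
move=> r_le0; have : f ^+ 2 < a ^+ 2 by nra.
by case: (lerP 0 f) => f_sign; nra.
Qed.

Lemma Minkowski_decomp p : (0 < d)%N ->
  exists mu n, [/\ 0 <= mu, unit_spatial n & p = p 0 ord0 *: e0 + mu *: n].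
Proof.
move=> d_gt0; set r := p - p 0 ord0 *: e0.
have r0 : r 0 ord0 = 0.
  by rewrite -mink_e0r !mink_linE !mink_e0r e0_time mulr1 subrr.
have p_eq : p = p 0 ord0 *: e0 + r by rewrite addrC subrK.
have [r_eq0 | nz_r] := eqVneq r 0.
  exists 0, (delta_mx 0 (@Ordinal d.+1 1 d_gt0)); split=> //.
    exact: unit_spatial_delta.
  by rewrite scale0r {1}p_eq r_eq0.
have sqrt_gt0 : 0 < Num.sqrt (- mink r r).
  by rewrite sqrtr_gt0 oppr_gt0 mink_spatial_lt0.
exists (Num.sqrt (- mink r r)), ((Num.sqrt (- mink r r))^-1 *: r); split.
- exact: ltW.
- exact: unit_spatial_normalize.
- by rewrite scalerA mulfV ?gt_eqF // scale1r.
Qed.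

Lemma in_Gamma_decomp (p0 mu : R) n :
  0 <= mu -> unit_spatial n -> in_Gamma (p0 *: e0 + mu *: n) <-> mu <= p0.
Proof.
move=> mu_ge0 [n0 nn]; rewrite /in_Gamma tcompE -mink_e0r.
rewrite !mink_linE !mink_e0l !mink_e0r e0_time n0 nn.
by split=> [[pp_ge0 p0_ge0] | mu_le_p0]; [nra | split; nra].
Qed.

Lemma exists_unit_spatial_perp n : (1 < d)%N ->
  exists m, unit_spatial m /\ mink m n = 0.
Proof.
move=> d_gt1; pose ei := delta_mx 0 (@Ordinal d.+1 1 (ltnW d_gt1)) : 'rV[R]_d.+1.
pose ej := delta_mx 0 (@Ordinal d.+1 2 d_gt1) : 'rV[R]_d.+1.
have [ei_perp | ei_nperp] := eqVneq (mink ei n) 0.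
  by exists ei; split=> //; exact: unit_spatial_delta.
set r := mink ej n *: ei - mink ei n *: ej.
have r0 : r 0 ord0 = 0 by rewrite !mxE /= mulr0 mulr0 subrr.
have nz_r : r != 0.
  apply: contra_neq ei_nperp => /rowP /(_ (@Ordinal d.+1 2 d_gt1)).
  by rewrite !mxE /=; lra.
exists ((Num.sqrt (- mink r r))^-1 *: r); split; first exact: unit_spatial_normalize.
by rewrite minkZl !mink_linE; ring.
Qed.

Definition mink_dyad (a b : 'rV[R]_d.+1) : 'M[R]_d.+1 := mink_mx *m a^T *m b.

Lemma mul_mink_dyad x (a b : 'rV[R]_d.+1) : x *m mink_dyad a b = mink x a *: b.
Proof.
by rewrite /mink_dyad !mulmxA minkE {1}[x *m _ *m _]mx11_scalar mul_scalar_mx.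
Qed.

Section Boost.
Variables (n : 'rV[R]_d.+1) (unit_n : unit_spatial n).

(* The boost along n with Doppler factor lam: it fixes the vectors orthogonal
   to e0 and n and scales the lightlike coordinates <x, e0 - n> and
   <x, e0 + n> by lam and lam^-1. *)
Definition boost (lam : R) x :=
  x + ((lam - 1) / 2 * mink x (e0 - n)) *: (e0 + n)
    + ((lam^-1 - 1) / 2 * mink x (e0 + n)) *: (e0 - n).

Definition boost_mx (lam : R) : 'M[R]_d.+1 :=
  1%:M + ((lam - 1) / 2) *: mink_dyad (e0 - n) (e0 + n)
       + ((lam^-1 - 1) / 2) *: mink_dyad (e0 + n) (e0 - n).

Lemma lightconeE :
  [/\ mink (e0 + n) (e0 + n) = 0, mink (e0 - n) (e0 - n) = 0,
      mink (e0 + n) (e0 - n) = 2 & mink (e0 - n) (e0 + n) = 2].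
Proof.
case: unit_n => n0 nn.
by rewrite !mink_linE !mink_e0l !mink_e0r e0_time n0 nn; split; ring.
Qed.

Lemma boost_minus lam x : mink (boost lam x) (e0 - n) = lam * mink x (e0 - n).
Proof.
case: lightconeE => pp mm pm mp; rewrite /boost !minkDl !minkZl pm mm mulr0 addr0.
by field.
Qed.

Lemma boost_plus lam x : mink (boost lam x) (e0 + n) = lam^-1 * mink x (e0 + n).
Proof.
case: lightconeE => pp mm pm mp; rewrite /boost !minkDl !minkZl pp mp mulr0 addr0.
by set t := lam^-1; field.
Qed.

Lemma mink_boostl lam x y : mink (boost lam x) y = mink x (boost lam^-1 y).
Proof.
rewrite /boost invrK !mink_linE.
by rewrite (minkC e0 y) (minkC n y); ring.
Qed.

Lemma boostM lam mu x : boost lam (boost mu x) = boost (lam * mu) x.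
Proof.
rewrite {1}/boost boost_minus boost_plus /boost invfM.
by apply/rowP => j; rewrite !mxE; ring.
Qed.

Lemma boost1 x : boost 1 x = x.
Proof. by rewrite /boost invr1 subrr !mul0r !scale0r !addr0. Qed.

Lemma boost_mink lam x y : lam != 0 -> mink (boost lam x) (boost lam y) = mink x y.
Proof. by move=> lam_neq0; rewrite mink_boostl boostM mulVf // boost1. Qed.

Lemma boost_Gamma_plus lam x :
  0 < lam -> in_Gamma_plus x -> in_Gamma_plus (boost lam x).
Proof.
move=> lam_gt0 Gx; split; first by rewrite boost_mink ?gt_eqF //; case: Gx.
have -> : tcomp (boost lam x) =
    2^-1 * (mink (boost lam x) (e0 - n) + mink (boost lam x) (e0 + n)).
  rewrite tcompE -mink_e0r -minkDr addrCA subrK -(mulr2n e0) -scaler_nat minkZr.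
  by field.
have := Gamma_plus_lightcone (unit_spatialN unit_n) Gx.
have := Gamma_plus_lightcone unit_n Gx.
rewrite boost_minus boost_plus => plus_gt0 minus_gt0.
by rewrite mulr_gt0 ?invr_gt0 // addr_gt0 // mulr_gt0 ?invr_gt0.
Qed.

Lemma boost_mxE lam x : x *m boost_mx lam = boost lam x.
Proof. by rewrite /boost_mx !mulmxDr mulmx1 -!scalemxAr !mul_mink_dyad !scalerA. Qed.

Lemma boost_lorentz lam : 0 < lam -> lorentz0 (boost_mx lam).
Proof.
have iso mu : mu != 0 ->
    forall x y, mink (x *m boost_mx mu) (y *m boost_mx mu) = mink x y.
  by move=> mu_neq0 x y; rewrite !boost_mxE boost_mink.
move=> lam_gt0; have sqrt_gt0 : 0 < Num.sqrt lam by rewrite sqrtr_gt0.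
split; last split.
- exact: iso (lt0r_neq0 lam_gt0).
- (* An isometry has determinant +-1, so its square has determinant 1. *)
  have -> : boost_mx lam = boost_mx (Num.sqrt lam) *m boost_mx (Num.sqrt lam).
    apply/row_matrixP => i; rewrite !rowE mulmxA !boost_mxE boostM.
    by rewrite -expr2 sqr_sqrtr // ltW.
  by rewrite det_mulmx -expr2 isometry_det_sqr //; exact/iso/lt0r_neq0.
- by move=> x; rewrite boost_mxE; exact: boost_Gamma_plus.
Qed.

End Boost.

Lemma exists_boost_lightcone_pos v n m :
  unit_spatial n -> unit_spatial m -> mink m n = 0 ->
  (forall x, in_Gamma_plus x -> 0 < mink v x) ->
  exists2 lam, 0 < lam & 0 < mink (boost m lam v) (e0 - n).
Proof.
move=> [n0 nn] [m0 _] mn v_pos.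
(* The boosts along m with lam = 2 and lam = 1/2 add up to pairing v with a
   timelike vector, so one of them makes the pairing with e0 - n positive. *)
have timelike : in_Gamma_plus ((5 / 2) *: e0 - 2 *: n).
  rewrite /in_Gamma_plus tcompE -mink_e0r.
  by rewrite !mink_linE !mink_e0l !mink_e0r e0_time n0 nn; split; lra.
have := v_pos _ timelike.
have -> : mink v ((5 / 2) *: e0 - 2 *: n) =
    mink (boost m 2 v) (e0 - n) + mink (boost m 2^-1 v) (e0 - n).
  rewrite !mink_boostl !invrK /boost !mink_linE !mink_e0l !mink_e0r e0_time.
  by rewrite n0 m0 (minkC n m) mn; field.
case: (ltrP 0 (mink (boost m 2 v) (e0 - n))) => [pos _ | nonpos sum_pos].
  by exists 2.
by exists 2^-1; rewrite ?invr_gt0 //; lra.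
Qed.

Lemma exists_boost_neg w n (p0 mu : R) :
  unit_spatial n -> 0 < mink w (e0 - n) -> p0 < mu ->
  exists2 lam, 0 < lam & mink (boost n lam w) (p0 *: e0 + mu *: n) < 0.
Proof.
move=> unit_n w_pos lt_p0_mu.
have -> : p0 *: e0 + mu *: n =
    ((p0 + mu) / 2) *: (e0 + n) + ((p0 - mu) / 2) *: (e0 - n).
  by apply/rowP => j; rewrite !mxE; field.
have Q_gt0 : 0 < (mu - p0) * mink w (e0 - n) by rewrite mulr_gt0 ?subr_gt0.
have [lam lam_gt0 ineq] := exists_div_lt_mul ((p0 + mu) * mink w (e0 + n)) Q_gt0.
exists lam => //; rewrite minkDr !minkZr boost_plus // boost_minus //.
by move: ineq; lra.
Qed.

Lemma Lorentz_orbit_dual v p : (1 < d)%N ->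
  (forall x, in_Gamma_plus x -> 0 < mink v x) ->
  (forall L, lorentz0 L -> 0 <= mink (v *m L) p) -> in_Gamma p.
Proof.
move=> d_gt1 v_pos orbit_ge0.
have [mu [n [mu_ge0 unit_n p_eq]]] := Minkowski_decomp p (ltnW d_gt1).
rewrite p_eq in orbit_ge0 *.
apply/(in_Gamma_decomp _ mu_ge0 unit_n); rewrite leNgt; apply/negP => lt_p0_mu.
have [m [unit_m mn]] := exists_unit_spatial_perp n d_gt1.
have [l1 l1_gt0 tilt] := exists_boost_lightcone_pos unit_n unit_m mn v_pos.
have [l2 l2_gt0 neg] := exists_boost_neg unit_n tilt lt_p0_mu.
have L_lorentz := lorentz0M (boost_lorentz unit_m l1_gt0) (boost_lorentz unit_n l2_gt0).
have := orbit_ge0 _ L_lorentz.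
by rewrite mulmxA !boost_mxE leNgt neg.
Qed.

End Minkowski.

Section SuperPoincare.
Variables (R : realType) (d N : nat) (G : super_poincare R d.+1 N).

Lemma br0l Y : br G 0 Y = 0.
Proof.
apply/(addrI (br G 0 Y)); rewrite addr0 -{1}(scale1r (br G 0 Y)) -br_linear.
by rewrite scale1r addr0.
Qed.

Lemma br_orbit X L : lorentz0 L -> exists Y, br G Y Y = br G X X *m L.
Proof.
by move=> /(cover_onto G) [a <-]; exists (X *m rho a); rewrite br_equiv.
Qed.

Lemma Gamma_Phi_nonneg p : in_Gamma p -> Phi_nonneg G p.
Proof.
move=> Gp X; rewrite /Phi; have [->|nz_X] := eqVneq X 0.
  by rewrite br0l /mink big1 ?mulr0 // => j _; rewrite mxE mul0r mulr0.
rewrite mulr_ge0 ?invr_ge0 ?ler0n //.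
by apply: dual_Gamma_plus_Gamma Gp => x; exact: br_pos.
Qed.

Lemma Phi_nonneg_Gamma p : (1 < d)%N -> (0 < N)%N -> Phi_nonneg G p -> in_Gamma p.
Proof.
move=> d_gt1 N_gt0 Phi_ge0; pose X : 'rV[R]_N := const_mx 1.
have nz_X : X != 0.
  by apply/eqP => /rowP /(_ (Ordinal N_gt0)); rewrite !mxE; apply/eqP/oner_neq0.
apply: (Lorentz_orbit_dual (v := br G X X)) => // [x | L /(br_orbit X) [Y <-]].
  exact: br_pos.
by have := Phi_ge0 Y; rewrite /Phi pmulr_rge0 // invr_gt0 ltr0n.
Qed.

End SuperPoincare.

Theorem lemma3p3p4 (R : realType) (D N : nat) (hD : (4 <= D)%N) (hN : (0 < N)%N)
  (G : super_poincare R D N) :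
  (forall p : 'rV[R]_D, Phi_nonneg G p <-> in_Gamma p) /\
  (forall p : 'rV[R]_D, 0 < tcomp p -> 0 < mink p p -> Phi_posdef G p).
Proof.
case: D hD G => [//|d] hD G; have d_gt1 : (1 < d)%N := ltnW hD.
split=> p; first by split; [exact: Phi_nonneg_Gamma | exact: Gamma_Phi_nonneg].
move=> p0_gt0 pp_gt0 X nz_X; rewrite /Phi mulr_gt0 ?invr_gt0 ?ltr0n //.
exact: br_pos.
Qed.
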